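(* Let $P$ be a program and $G$ a goal. If every SLD derivation of $G$ in $P$ is finite, independently of the selection rule used (i.e. for arbitrary choices of the selected atom at each step), then every RSLD derivation of $G$ in $P$ is finite.
   Context: Goals are finite lists of atoms; a clause is $h\leftarrow B$ with $h$ an atom and $B$ a goal; a program is a finite set of clauses. For goals regarded as lists, $N\subseteq_L G$ means $N$ is a subsequence of $G$, and $G-N$ denotes the list of deleted atoms. $var(E)$ is the set of variables of $E$. If $G=a_1,\dots,a_k$, $c=(h\leftarrow B)$, $\xi$ a renaming and $\theta$ an idempotent relevant mgu of $h\xi$ and some $a_i$, then $(a_1,\dots,a_{i-1},B\xi,a_{i+1},\dots,a_k)\theta$ is a resolvent of $G$ and $c$. An SLD derivation of $G_0$ in $P$ is a finite or infinite sequence $G_0\xrightarrow{c_0\xi_0,\theta_0}G_1\xrightarrow{c_1\xi_1,\theta_1}\cdots$ of such steps with $c_j\in P$ and $var(c_j\xi_j)\cap(var(G_0)\cup var(c_0\xi_0)\cup\dots\cup var(c_{j-1}\xi_{j-1}))=\emptyset$. Reduced goal: $N$ is a reduced goal of $G$ by the substitution $\tau$ up to the variable set $X$, written $G>>^{\tau}N$, if (i) $N\subseteq_L G$, (ii) for every atom $b$ of $G-N$, $b\tau$ occurs in $N$, (iii) $x\tau=x$ for every $x\in var(N)\cup X$. RSLD derivation of $G_0$ in $P$: a finite or infinite sequence $G_0>>^{\alpha_0}N_0\xrightarrow{c_0\xi_0,\theta_0}G_1>>^{\alpha_1}N_1\xrightarrow{c_1\xi_1,\theta_1}G_2\cdots$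 where each $N_j\xrightarrow{c_j\xi_j,\theta_j}G_{j+1}$ is an SLD resolution step with $c_j\in P$, $var(c_j\xi_j)\cap(var(G_0)\cup var(c_0\xi_0)\cup\dots\cup var(c_{j-1}\xi_{j-1}))=\emptyset$, and $G_j>>^{\alpha_j}N_j$ up to $var(G_0\theta_0\cdots\theta_{j-1})$. *)

From Stdlib Require Import List Arith.
Import ListNotations.

Inductive term : Type :=
| Var : nat -> term
| Fn : nat -> list term -> term.

Inductive atom : Type :=
| Atom : nat -> list term -> atom.

Definition goal := list atom.
(** a clause [h <- B] *)
Definition clause := (atom * goal)%type.
Definition program := list clause.

Definition subst := nat -> term.

Fixpoint tsubst (s : subst) (t : term) : term :=
  match t with
  | Var x => s x
  | Fn f ts => Fn f (map (tsubst s) ts)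
  end.

Definition asubst (s : subst) (a : atom) : atom :=
  match a with Atom p ts => Atom p (map (tsubst s) ts) end.

Definition gsubst (s : subst) (G : goal) : goal := map (asubst s) G.

Definition csubst (s : subst) (c : clause) : clause :=
  (asubst s (fst c), gsubst s (snd c)).

Fixpoint tvars (t : term) : list nat :=
  match t with
  | Var x => [x]
  | Fn _ ts => flat_map tvars ts
  end.

Definition avars (a : atom) : list nat :=
  match a with Atom _ ts => flat_map tvars ts end.

Definition gvars (G : goal) : list nat := flat_map avars G.

Definition cvars (c : clause) : list nat := avars (fst c) ++ gvars (snd c).

Definition renaming (xi : subst) : Prop :=
  exists (pi pinv : nat -> nat),
    (forall x, pinv (pi x) = x) /\ (forall x, pi (pinv x) = x) /\
    (forall x, xi x = Var (pi x)).

Definition unifier (th : subst) (a b : atom) : Prop := asubst th a = asubst th b.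

Definition mgu (th : subst) (a b : atom) : Prop :=
  unifier th a b /\
  forall sg, unifier sg a b -> exists dl : subst, forall x, tsubst dl (th x) = sg x.

Definition idempotent (th : subst) : Prop := forall x, tsubst th (th x) = th x.

Definition relevant (th : subst) (a b : atom) : Prop :=
  forall x, th x <> Var x ->
    In x (avars a ++ avars b) /\
    (forall y, In y (tvars (th x)) -> In y (avars a ++ avars b)).

Definition resolvent (G : goal) (c : clause) (xi th : subst) (G' : goal) : Prop :=
  exists G1 a G2,
    G = G1 ++ a :: G2 /\
    renaming xi /\
    idempotent th /\
    relevant th (asubst xi (fst c)) a /\
    mgu th (asubst xi (fst c)) a /\
    G' = gsubst th (G1 ++ gsubst xi (snd c) ++ G2).

Definition std_apart (G0 : goal) (c : nat -> clause) (xi : nat -> subst) (j : nat) : Prop :=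
  forall x, In x (cvars (csubst (xi j) (c j))) ->
    ~ In x (gvars G0) /\
    (forall k, k < j -> ~ In x (cvars (csubst (xi k) (c k)))).

Definition infinite_SLD (P : program) (G0 : goal) : Prop :=
  exists (G : nat -> goal) (c : nat -> clause) (xi th : nat -> subst),
    G 0 = G0 /\
    forall j, In (c j) P /\ std_apart G0 c xi j /\
              resolvent (G j) (c j) (xi j) (th j) (G (S j)).

Definition all_SLD_finite (P : program) (G0 : goal) : Prop := ~ infinite_SLD P G0.

Fixpoint mask {A : Type} (m : list bool) (s : list A) : list A :=
  match m, s with
  | b :: m', x :: s' => if b then x :: mask m' s' else mask m' s'
  | _, _ => []
  end.

(** Reduced goal: [G >>^tau N] up to the variable set [X].
    N is the subsequence of G selected by [m]; G - N is the complementary list. *)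
Definition reduced (G N : goal) (tau : subst) (X : nat -> Prop) : Prop :=
  exists m : list bool,
    length m = length G /\
    N = mask m G /\
    (forall b, In b (mask (map negb m) G) -> In (asubst tau b) N) /\
    (forall x, In x (gvars N) \/ X x -> tau x = Var x).

Fixpoint gcomp (th : nat -> subst) (G0 : goal) (j : nat) : goal :=
  match j with
  | 0 => G0
  | S j' => gsubst (th j') (gcomp th G0 j')
  end.

Definition infinite_RSLD (P : program) (G0 : goal) : Prop :=
  exists (G N : nat -> goal) (al : nat -> subst) (c : nat -> clause) (xi th : nat -> subst),
    G 0 = G0 /\
    forall j, In (c j) P /\ std_apart G0 c xi j /\
              reduced (G j) (N j) (al j) (fun x => In x (gvars (gcomp th G0 j))) /\
              resolvent (N j) (c j) (xi j) (th j) (G (S j)).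

Definition all_RSLD_finite (P : program) (G0 : goal) : Prop := ~ infinite_RSLD P G0.

(* An RSLD step resolves an atom of a subsequence N of the current goal G; the
   same atom, clause, renaming and mgu give an SLD step from any goal H having G
   as a subsequence, and its resolvent has the RSLD resolvent as a subsequence
   (applying a substitution preserves subsequences).  Starting from H = G0,
   an infinite RSLD derivation is thus shadowed step by step by an infinite SLD
   derivation using the same clauses and renamings, hence standardized apart. *)

From Stdlib Require Import List Arith.
From Stdlib Require Import ClassicalEpsilon.
Import ListNotations.

Inductive subseq {A : Type} : list A -> list A -> Prop :=
| subseq_nil : subseq [] []
| subseq_skip x l1 l2 : subseq l1 l2 -> subseq l1 (x :: l2)
| subseq_keep x l1 l2 : subseq l1 l2 -> subseq (x :: l1) (x :: l2).

Section Subsequences.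
Context {A : Type}.

Lemma subseq_nil_l (l : list A) : subseq [] l.
Proof. induction l; constructor; assumption. Qed.

Lemma subseq_refl (l : list A) : subseq l l.
Proof. induction l; constructor; assumption. Qed.

Lemma subseq_trans (l1 l2 l3 : list A) : subseq l1 l2 -> subseq l2 l3 -> subseq l1 l3.
Proof.
  intros H12 H23; revert l1 H12.
  induction H23; intros l0 H.
  - exact H.
  - constructor; auto.
  - inversion H; subst; [apply subseq_skip | apply subseq_keep]; auto.
Qed.

Lemma subseq_app (l1 l2 l3 l4 : list A) :
  subseq l1 l2 -> subseq l3 l4 -> subseq (l1 ++ l3) (l2 ++ l4).
Proof. intros H12 H34; induction H12; simpl; try constructor; assumption. Qed.

Lemma subseq_map {B : Type} (f : A -> B) (l1 l2 : list A) :
  subseq l1 l2 -> subseq (map f l1) (map f l2).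
Proof. intros H; induction H; simpl; constructor; assumption. Qed.

Lemma mask_subseq (m : list bool) (l : list A) : subseq (mask m l) l.
Proof.
  revert m; induction l as [|x l IH]; intros [|[|] m]; simpl.
  - constructor.
  - constructor.
  - constructor.
  - apply subseq_nil_l.
  - apply subseq_keep, IH.
  - apply subseq_skip, IH.
Qed.

Lemma subseq_app_cons_inv (l1 l2 : list A) (a : A) (l : list A) :
  subseq (l1 ++ a :: l2) l ->
  exists k1 k2, l = k1 ++ a :: k2 /\ subseq l1 k1 /\ subseq l2 k2.
Proof.
  revert l1; induction l as [|x l IH]; intros l1 Hs.
  - inversion Hs; destruct l1; discriminate.
  - inversion Hs as [| ? ? ? Hs' | y l1' ? Hs' E]; subst.
    + destruct (IH _ Hs') as (k1 & k2 & -> & S1 & S2).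
      exists (x :: k1), k2; repeat split; [apply subseq_skip |]; assumption.
    + destruct l1 as [|z l1]; injection E as -> ->.
      * exists [], l; repeat split; [apply subseq_nil_l | assumption].
      * destruct (IH _ Hs') as (k1 & k2 & -> & S1 & S2).
        exists (z :: k1), k2; repeat split; [apply subseq_keep |]; assumption.
Qed.

End Subsequences.

Lemma resolvent_subseq (N H : goal) (c : clause) (xi th : subst) (N' : goal) :
  subseq N H -> resolvent N c xi th N' ->
  exists H', subseq N' H' /\ resolvent H c xi th H'.
Proof.
  intros Hs (N1 & a & N2 & -> & Hren & Hidem & Hrel & Hmgu & ->).
  destruct (subseq_app_cons_inv _ _ _ _ Hs) as (H1 & H2 & -> & S1 & S2).
  exists (gsubst th (H1 ++ gsubst xi (snd c) ++ H2)); split.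
  - apply subseq_map, subseq_app, subseq_app; auto using subseq_refl.
  - exists H1, a, H2; auto 7.
Qed.

Section Shadowing.
Variables (A : Type) (shadows : nat -> A -> Prop) (step : nat -> A -> A -> Prop).
Variable x0 : A.
Hypothesis shadows0 : shadows 0 x0.
Hypothesis shadows_step :
  forall j x, shadows j x -> exists y, shadows (S j) y /\ step j x y.

Fixpoint shadow (j : nat) : {x : A | shadows j x} :=
  match j with
  | 0 => exist _ x0 shadows0
  | S j =>
      let e := constructive_indefinite_description _
                 (shadows_step j _ (proj2_sig (shadow j))) in
      exist _ (proj1_sig e) (proj1 (proj2_sig e))
  end.

Lemma shadow_sequence :
  exists xs : nat -> A, xs 0 = x0 /\ forall j, step j (xs j) (xs (S j)).
Proof.
  exists (fun j => proj1_sig (shadow j)); split; [reflexivity |].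
  intros j; simpl.
  exact (proj2 (proj2_sig (constructive_indefinite_description _
                             (shadows_step j _ (proj2_sig (shadow j)))))).
Qed.

End Shadowing.

Theorem theoremt1p1p1 (P : program) (G0 : goal) :
  all_SLD_finite P G0 -> all_RSLD_finite P G0.
Proof.
  intros Hfin (G & N & al & c & xi & th & E0 & Hj).
  apply Hfin.
  destruct (shadow_sequence goal (fun j H => subseq (G j) H)
              (fun j H H' => resolvent H (c j) (xi j) (th j) H') G0)
    as (Hs & Hs0 & Hstep).
  - rewrite E0; apply subseq_refl.
  - intros j H HG.
    destruct (Hj j) as (_ & _ & (m & _ & EN & _) & Hres).
    apply (resolvent_subseq (N j)); [| exact Hres].
    rewrite EN; exact (subseq_trans _ _ _ (mask_subseq _ _) HG).
  - exists Hs, c, xi, th; split; [exact Hs0 |].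
    intros j; destruct (Hj j) as (Hin & Hstd & _).
    auto.
Qed.
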